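(* Let $p$ be a prime and, in characteristic $p$, let $\chi_p(z):=\operatorname{Tr}[A(z+p-1)A(z+p-2)\cdots A(z+1)A(z)]$. Then $$\chi_p(z)=\begin{cases}\mathcal{I}_p-t^pz+t^pz^p, & p\neq2,\\ \mathcal{I}_2+(1+t^2)(z+z^2), & p=2.\end{cases}$$
   Context: Define the $2\times2$ matrix polynomial in $z$ with coefficients in $\mathbb{Z}[f,g,\alpha_1,\alpha_2,t,w,w^{-1}]$: $$A(z)=\begin{bmatrix}w&0\\0&1\end{bmatrix}\begin{bmatrix}1&0\\ f-tfg-tz&1\end{bmatrix}\begin{bmatrix}g&1\\ z+\alpha_2&0\end{bmatrix}\begin{bmatrix}-f&1\\ z&0\end{bmatrix}\begin{bmatrix}tz-g+tfg&1\\ z-\alpha_1&0\end{bmatrix}\begin{bmatrix}w^{-1}&0\\0&1\end{bmatrix},$$ and $\mathcal{I}_p:=\operatorname{Tr}[A(p-1)\cdots A(1)A(0)]$ computed in characteristic $p$, an element of $\mathbb{F}_p[f,g,\alpha_1,\alpha_2,t]$ (independent of $w$). *)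

From HB Require Import structures.
From mathcomp Require Import all_boot all_order all_algebra.
Set Implicit Arguments. Unset Strict Implicit. Unset Printing Implicit Defensive.
Import GRing.Theory.
Local Open Scope ring_scope.

Definition mx2 (S : pzRingType) (a b c d : S) : 'M[S]_2 :=
  \matrix_(i < 2, j < 2)
    if val i == 0%N then (if val j == 0%N then a else b)
    else (if val j == 0%N then c else d).

(* A(z) with parameters f g al1 al2 t, and w, wi standing for w and w^{-1}. *)
Definition Amat (S : comPzRingType) (f g al1 al2 t w wi z : S) : 'M[S]_2 :=
  mx2 w 0 0 1
  *m mx2 1 0 (f - t * f * g - t * z) 1
  *m mx2 g 1 (z + al2) 0
  *m mx2 (- f) 1 z 0
  *m mx2 (t * z - g + t * f * g) 1 (z - al1) 0
  *m mx2 wi 0 0 1.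

Definition Ip (R : comUnitRingType) (p : nat) (f g al1 al2 t w : R) : R :=
  \tr (\prod_(i < p) Amat f g al1 al2 t w w^-1 ((p.-1 - i)%N)%:R : 'M[R]_2).

Definition chip (R : comUnitRingType) (p : nat) (f g al1 al2 t w : R) : {poly R} :=
  \tr (\prod_(i < p)
         Amat f%:P g%:P al1%:P al2%:P t%:P w%:P (w^-1)%:P ('X + ((p.-1 - i)%N)%:R)
       : 'M[{poly R}]_2).

(* Writing A(y) = W L(y) K(y) W^-1 with W = diag(w, 1), and using z + p = z in
   characteristic p, a cyclic rotation of the trace gives
   chi_p(z) = tr (P(z + p - 1) ... P(z)) with P(y) = K(y) L(y - 1).  The same
   periodicity makes chi_p invariant under z |-> z + 1, and a weighted degree count
   (conjugating P by diag(1, z^(1/2))) gives deg chi_p < 2p.  In characteristic p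
   such a polynomial is c_0 + c (z^p - z), and c_0 = chi_p(0) = I_p.
   To find c, split P = D + O into its diagonal and off-diagonal parts and expand
   tr prod_k (D(z + k) + eps O(z + k)) in eps.  The eps^0 term contributes
   (f + t)^p + (-f)^p = t^p to the coefficient of z^p, and the eps^p term
   contributes 1 if p = 2 and 0 otherwise (an odd product of off-diagonal matrices
   is traceless).  For 0 < j < p, j times the eps^j term is the eps^(j-1) term of
   the eps-derivative, whose trace is the sum over i < p of the shifts z |-> z + i
   of a single polynomial of degree < 2p - 1; its z^p coefficient vanishes because
   sum_(i < p) i^e = 0 for e < p - 1. *)

From HB Require Import structures.
From mathcomp Require Import all_boot all_order all_algebra.
From mathcomp Require Import ring zify.
Set Implicit Arguments. Unset Strict Implicit. Unset Printing Implicit Defensive.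
Import GRing.Theory.
Local Open Scope ring_scope.

Fixpoint rprod {T : pzSemiRingType} (n : nat) (M : nat -> T) : T :=
  if n is n'.+1 then M n' * rprod n' M else 1.

Section DescendingProducts.
Variable T : pzSemiRingType.
Implicit Types (M N : nat -> T) (m n : nat).

Lemma rprodS n M : rprod n.+1 M = M n * rprod n M.
Proof. by []. Qed.

Lemma rprod_ord n M : \prod_(i < n) M (n.-1 - i)%N = rprod n M.
Proof.
elim: n M => [|n IHn] M /=; first by rewrite big_ord0.
rewrite big_ord_recl subn0 -IHn; congr (_ * _).
by apply: eq_bigr => i _; rewrite lift0 subnS predn_sub.
Qed.

Lemma eq_rprod n M N : (forall k, (k < n)%N -> M k = N k) -> rprod n M = rprod n N.
Proof. by elim: n => //= n IHn eqMN; rewrite eqMN // IHn // => k /ltnW/eqMN. Qed.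

Lemma rprodD m n M : rprod (m + n) M = rprod n (fun k => M (m + k)%N) * rprod m M.
Proof. by elim: n => [|n IHn] /=; rewrite ?addn0 ?mul1r // addnS /= IHn mulrA. Qed.

Lemma rprod_recl n M : rprod n.+1 M = rprod n (fun k => M k.+1) * M 0%N.
Proof. by rewrite -add1n rprodD /= mulr1. Qed.

Lemma rprod_cst n (c : T) : rprod n (fun=> c) = c ^+ n.
Proof. by elim: n => //= n ->; rewrite exprS. Qed.

Lemma rprod_conj n (U V : T) M : U * V = 1 -> V * U = 1 ->
  rprod n (fun k => U * M k * V) = U * rprod n M * V.
Proof.
move=> UV VU; elim: n => [|n IHn] /=; first by rewrite mulr1.
by rewrite IHn !mulrA -[_ * V * U]mulrA VU mulr1.
Qed.

Lemma rprod_regroup n (K L : nat -> T) :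
  rprod n.+1 (fun k => L k * K k) = L n * rprod n (fun k => K k.+1 * L k) * K 0%N.
Proof.
elim: n => [|n IHn]; first by rewrite /= !mulr1.
by rewrite rprodS IHn rprodS !mulrA.
Qed.

Lemma rmorph_rprod (U : pzSemiRingType) (phi : {rmorphism T -> U}) n M :
  phi (rprod n M) = rprod n (phi \o M).
Proof. by elim: n => [|n IHn] /=; rewrite ?rmorph1 // rmorphM IHn. Qed.

End DescendingProducts.

Section PolyProducts.
Variable T : nzRingType.
Implicit Types M : nat -> {poly T}.

Lemma coef0_rprod n M : (rprod n M)`_0 = rprod n (fun k => (M k)`_0).
Proof. by elim: n => [|n IHn] /=; rewrite ?coefC // coef0M IHn. Qed.

Lemma horner1_rprod n M : (rprod n M).[1] = rprod n (fun k => (M k).[1]).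
Proof.
elim: n => [|n IHn] /=; first by rewrite hornerC.
by rewrite hornerM_comm ?IHn // /comm_poly mulr1 mul1r.
Qed.

Lemma deriv_rprod n M :
  (rprod n M)^`() = \sum_(i < n) rprod n (fun k => if k == i then (M k)^`() else M k).
Proof.
elim: n => [|n IHn] /=; first by rewrite big_ord0 -polyC1 derivC.
rewrite derivM IHn big_ord_recr /= eqxx addrC mulr_sumr; congr (_ + _).
  by congr (_ * _); apply: eq_rprod => k ltkn; rewrite ifN // neq_ltn ltkn.
by apply: eq_bigr => i _; rewrite ifN // neq_ltn orbC ltn_ord.
Qed.

Lemma coefM_size_le (a b : {poly T}) m n :
  (size a <= m.+1)%N -> (size b <= n.+1)%N -> (a * b)`_(m + n) = a`_m * b`_n.
Proof.
move=> sza szb; rewrite coefM (bigD1 (Ordinal (leq_addr n m.+1))) //= addKn.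
rewrite big1 ?addr0 // => -[i /= ltimn]; rewrite -val_eqE /= => /eqP neqim.
have [ltim|ltmi] := ltnP i m.
  by rewrite [b`__]nth_default ?mulr0 //; apply: leq_trans szb _; lia.
by rewrite [a`__]nth_default ?mul0r //; apply: leq_trans sza _; lia.
Qed.

Lemma coef_rprod_top n M : (forall k, (size (M k) <= 2)%N) ->
  (size (rprod n M) <= n.+1)%N /\ (rprod n M)`_n = rprod n (fun k => (M k)`_1).
Proof.
move=> szM; elim: n => [|n [szMn IHn]] /=; first by rewrite size_poly1 coefC.
split; first by apply: leq_trans (size_polyMleq _ _) _; have := szM n; lia.
by rewrite -add1n coefM_size_le // IHn.
Qed.

End PolyProducts.

Section TwoByTwo.
Variable S : pzRingType.
Implicit Types a b c d : S.

Lemma mx2_mul a b c d a' b' c' d' :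
  mx2 a b c d * mx2 a' b' c' d' =
  mx2 (a * a' + b * c') (a * b' + b * d') (c * a' + d * c') (c * b' + d * d').
Proof.
apply/matrixP => i j; rewrite -mulmxE !mxE !big_ord_recl big_ord0 !mxE addr0 /=.
by case: i j => [[|[|//]] ?] [[|[|//]] ?].
Qed.

Lemma mx2_add a b c d a' b' c' d' :
  mx2 a b c d + mx2 a' b' c' d' = mx2 (a + a') (b + b') (c + c') (d + d').
Proof. by apply/matrixP => i j; rewrite !mxE; case: ifP; case: ifP. Qed.

Lemma mx2_1 : mx2 1 0 0 1 = 1 :> 'M[S]_2.
Proof. by apply/matrixP => i j; rewrite !mxE; case: i j => [[|[|//]] ?] [[|[|//]] ?]. Qed.

Lemma mxtrace_mx2 a b c d : \tr (mx2 a b c d) = a + d.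
Proof. by rewrite /mxtrace !big_ord_recl big_ord0 !mxE addr0. Qed.

Lemma map_mx2 (S' : pzRingType) (h : S -> S') a b c d :
  map_mx h (mx2 a b c d) = mx2 (h a) (h b) (h c) (h d).
Proof. by apply/matrixP => i j; rewrite !mxE; case: ifP; case: ifP. Qed.

Lemma rprod_diag n (a d : nat -> S) :
  rprod n (fun k => mx2 (a k) 0 0 (d k)) = mx2 (rprod n a) 0 0 (rprod n d).
Proof.
elim: n => [|n IHn] /=; first by rewrite mx2_1.
by rewrite IHn mx2_mul !(mul0r, mulr0, addr0, add0r).
Qed.

Lemma mxtrace_rprod_antidiag n (b c : nat -> S) :
  odd n -> \tr (rprod n (fun k => mx2 0 (b k) (c k) 0)) = 0.
Proof.
have [x [y ->]] : exists x y, rprod n (fun k => mx2 0 (b k) (c k) 0) =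
    if odd n then mx2 0 x y 0 else mx2 x 0 0 y.
  elim: n => [|n [x [y /= ->]]]; first by exists 1, 1; rewrite mx2_1.
  exists (b n * y), (c n * x).
  by case: (odd n); rewrite mx2_mul !(mul0r, mulr0, addr0, add0r).
by move=> ->; rewrite mxtrace_mx2 addr0.
Qed.

End TwoByTwo.

Lemma mxtrace_mulrC (R : comPzRingType) n (A B : 'M[R]_n.+1) : \tr (A * B) = \tr (B * A).
Proof. by rewrite -!mulmxE mxtrace_mulC. Qed.

Lemma mxtrace_coefMC (R : comNzRingType) n (A B : {poly 'M[R]_n.+1}) m :
  \tr ((A * B)`_m) = \tr ((B * A)`_m).
Proof.
rewrite !coefM !raddf_sum [RHS](reindex_inj rev_ord_inj) /=.
by apply: eq_bigr => i _; rewrite mxtrace_mulrC subKn ?leq_ord.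
Qed.

Lemma size_subC_le2 (R : nzRingType) (y : {poly R}) c :
  (size y <= 2)%N -> (size (y - c%:P)%R <= 2)%N.
Proof.
move=> szy; rewrite (leq_trans (size_polyD _ _)) // geq_max szy size_polyN.
exact: leq_trans (size_polyC_leq1 _) _.
Qed.

Lemma size_MsubC_le2 (R : nzRingType) (y : {poly R}) a c :
  (size y <= 2)%N -> (size (a%:P * y - c%:P)%R <= 2)%N.
Proof. by move=> szy; rewrite size_subC_le2 // mul_polyC (leq_trans (size_scale_leq _ _)). Qed.

Lemma coef2_cubic (R : comNzRingType) (a b c : R) :
  (('X + a%:P) * ('X + b%:P) * ('X + c%:P))`_2 = a + b + c.
Proof.
have -> : ('X + a%:P) * ('X + b%:P) * ('X + c%:P) =
    'X^3 + 'X^2 * (a + b + c)%:P + 'X * (a * b + b * c + c * a)%:P + (a * b * c)%:P.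
  by rewrite !(polyCD, polyCM); ring.
by rewrite !coefD coefXn coefXnM coefXM !coefC /= add0r !addr0.
Qed.

Lemma coef_comp_XaddC (R : comNzRingType) (h : {poly R}) c m :
  (h \Po ('X + c%:P))`_m = \sum_(n < size h) h`_n * (c ^+ (n - m) *+ 'C(n, m)).
Proof.
rewrite coef_comp_poly; apply: eq_bigr => n _; congr (_ * _).
rewrite addrC exprDn coef_sum.
under eq_bigr => i _ do rewrite coefMn -polyC_exp coefCM coefXn.
have [ltmn1|ltnm] := ltnP m n.+1; last first.
  rewrite bin_small // mulr0n big1 // => i _.
  by rewrite (gtn_eqF (leq_trans (ltn_ord i) ltnm)) mulr0 mul0rn.
rewrite (bigD1 (Ordinal ltmn1)) //= eqxx mulr1 big1 ?addr0 // => i neqi.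
by rewrite eq_sym -val_eqE /= in neqi; rewrite (negbTE neqi) mulr0 mul0rn.
Qed.

Section CharacteristicP.
Variables (R : comNzRingType) (p : nat).
Hypothesis pcharRp : p \in [pchar R].

Let p_prime : prime p := pcharf_prime pcharRp.
Let natr_p : p%:R = 0 :> R := pcharf0 pcharRp.

Lemma mulrn_eq0_pchar (c : R) j : ~~ (p %| j)%N -> c *+ j = 0 -> c = 0.
Proof.
move=> pNdvdj cj0; have [a _] := Bezoutl j (prime_gt0 p_prime).
have /eqP -> : gcdn p j == 1%N by rewrite -/(coprime p j) prime_coprime.
case/dvdnP=> q def_aj.
have : c *+ (1 + a * j) = 0.
  by rewrite def_aj mulrnA -mulr_natr natr_p mulr0.
by rewrite mulrnDr mulnC mulrnA cj0 mul0rn addr0.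
Qed.

Lemma sum_expr_pchar e : (e.+1 < p)%N -> \sum_(i < p) (i%:R : R) ^+ e = 0.
Proof.
elim/ltn_ind: e => e IHe lte1p.
have telescope : \sum_(i < p) ((i%:R + 1 : R) ^+ e.+1 - i%:R ^+ e.+1) = 0.
  rewrite -(big_mkord xpredT (fun i => (i%:R + 1 : R) ^+ e.+1 - i%:R ^+ e.+1)).
  under eq_bigr do rewrite natr1.
  by rewrite telescope_sumr // natr_p expr0n subr0.
have expand (x : R) : (x + 1) ^+ e.+1 - x ^+ e.+1 = \sum_(k < e.+1) x ^+ k *+ 'C(e.+1, k).
  by rewrite exprD1n big_ord_recr /= binn addrK.
rewrite (eq_bigr _ (fun (i : 'I_p) _ => expand i%:R)) exchange_big big_ord_recr /= in telescope.
rewrite big1 ?add0r in telescope; last first.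
  by move=> k _; rewrite sumrMnl IHe ?mul0rn //; have := ltn_ord k; lia.
rewrite sumrMnl binSn in telescope.
by apply: mulrn_eq0_pchar telescope; rewrite gtnNdvd.
Qed.

Lemma coef_sum_comp_XaddC_pchar (h : {poly R}) : (size h <= (p + p).-1)%N ->
  (\sum_(i < p) (h \Po ('X + (i%:R)%:P)))`_p = 0.
Proof.
move=> szh; rewrite coef_sum.
under eq_bigr do rewrite coef_comp_XaddC.
rewrite exchange_big /=; apply: big1 => n _; rewrite -mulr_sumr sumrMnl.
have [ltnp|lepn] := ltnP n p; first by rewrite bin_small // mulr0n mulr0.
rewrite sum_expr_pchar ?mul0rn ?mulr0 //.
by move: (ltn_ord n) szh lepn; move: (size h) (nat_of_ord n) => s k; lia.
Qed.

Lemma comp_XaddC1_Xp_subX : ('X ^+ p - 'X : {poly R}) \Po ('X + 1) = 'X ^+ p - 'X.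
Proof.
have pcharSp : p \in [pchar {poly R}] by rewrite pchar_poly.
have pnat_p : [pchar {poly R}].-nat p by rewrite (eq_pnat _ (pcharf_eq pcharSp)) pnat_id.
by rewrite comp_polyB rmorphXn /= comp_polyX exprDn_pchar // expr1n opprD addrACA subrr addr0.
Qed.

Lemma comp_XaddC1_eq_dvdn (h : {poly R}) : h \Po ('X + 1) = h -> (p %| (size h).-1)%N.
Proof.
move=> hXh; case def_d: (size h) => [|[|n]] //=.
have := congr1 (fun q : {poly R} => q`_n) hXh; rewrite /= -polyC1 coef_comp_XaddC def_d.
rewrite !big_ord_recr big1 /=; last by move=> i _; rewrite bin_small ?mulr0n ?mulr0.
rewrite add0r subnn binn binSn expr0 expr1n mulr1n mulr1 mulr_natr => /eqP.
rewrite -subr_eq0 addrAC subrr add0r => /eqP lead0.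
apply: contraT => /mulrn_eq0_pchar/(_ lead0) /eqP.
have -> : n.+1 = (size h).-1 by rewrite def_d.
by rewrite -lead_coefE lead_coef_eq0 -size_poly_eq0 def_d.
Qed.

Lemma comp_XaddC1_eq (h : {poly R}) : h \Po ('X + 1) = h -> (size h <= p + p)%N ->
  h = (h`_0)%:P + (h`_p)%:P * ('X ^+ p - 'X).
Proof.
move=> hXh szh; have p_gt1 := prime_gt1 p_prime.
have {}szh : (size h <= p.+1)%N.
  case/dvdnP: (comp_XaddC1_eq_dvdn hXh) szh => -[|[|k]]; move: (size h) => d; nia.
set r := h - (h`_p)%:P * ('X ^+ p - 'X).
have rXr : r \Po ('X + 1) = r.
  by rewrite comp_polyB comp_polyM comp_polyC comp_XaddC1_Xp_subX hXh.
have szr : (size r <= p)%N.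
  apply/leq_sizeP => j lepj; rewrite coefB coefCM coefB coefXn coefX.
  have [->|neqjp] := eqVneq j p; first by rewrite (gtn_eqF p_gt1) mulr1n mulr0n subr0 mulr1 subrr.
  rewrite (gtn_eqF (leq_trans p_gt1 lepj)) subrr mulr0 subr0 nth_default //.
  by move/eqP: neqjp; move: szh; move: (size h) => d; lia.
have /size1_polyC def_r : (size r <= 1)%N.
  case/dvdnP: (comp_XaddC1_eq_dvdn rXr) szr => -[|k]; move: (size r) => d; nia.
have r0 : r`_0 = h`_0.
  by rewrite coefB coefCM coefB coefXn coefX (ltn_eqF (prime_gt0 p_prime)) /= subrr mulr0 subr0.
by rewrite -r0 -def_r subrK.
Qed.

End CharacteristicP.

Section WeightedDegree.
Variables (R : nzRingType) (n : nat).
Implicit Types (A B N : 'M[{poly R}]_n) (e : nat).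

(* deg (N i j) <= (e + i - j) / 2, i.e., D^-1 N D has degree at most e / 2 for
   D = diag (X^(k/2))_k. *)
Definition wdeg_le N e := forall i j : 'I_n, (2 * size (N i j) <= e + 2 + i - j)%N.

Lemma wdeg_leW N e e' : (e <= e')%N -> wdeg_le N e -> wdeg_le N e'.
Proof. by move=> le_ee' wN i j; apply: leq_trans (wN i j) _; lia. Qed.

Lemma wdeg_le0 e : wdeg_le 0 e.
Proof. by move=> i j; rewrite mxE size_poly0. Qed.

Lemma wdeg_leD A B e : wdeg_le A e -> wdeg_le B e -> wdeg_le (A + B) e.
Proof.
move=> wA wB i j; rewrite mxE; apply: leq_trans (leq_mul (leqnn 2) (size_polyD _ _)) _.
by rewrite maxnMr geq_max wA wB.
Qed.

Lemma wdeg_le_sum I (r : seq I) (P : pred I) (F : I -> 'M[{poly R}]_n) e :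
  (forall i, P i -> wdeg_le (F i) e) -> wdeg_le (\sum_(i <- r | P i) F i) e.
Proof.
move=> wF; apply: (big_ind (wdeg_le^~ e)) => //; first exact: wdeg_le0.
by move=> x y; apply: wdeg_leD.
Qed.

Lemma wdeg_leM A B e e' : wdeg_le A e -> wdeg_le B e' -> wdeg_le (A *m B) (e + e').
Proof.
move=> wA wB i j; rewrite mxE.
apply: (big_ind (fun x : {poly R} => 2 * size x <= e + e' + 2 + i - j)%N).
- by rewrite size_poly0.
- move=> x y lex ley; apply: leq_trans (leq_mul (leqnn 2) (size_polyD x y)) _.
  by rewrite maxnMr geq_max lex ley.
move=> k _; have [->|nzA] := eqVneq (A i k) 0; first by rewrite mul0r size_poly0.
have [->|nzB] := eqVneq (B k j) 0; first by rewrite mulr0 size_poly0.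
have := wA i k; have := wB k j; have := size_polyMleq (A i k) (B k j).
rewrite -size_poly_gt0 in nzA; rewrite -size_poly_gt0 in nzB; move: nzA nzB.
move: (size (A i k)) (size (B k j)) (size (A i k * B k j)) => a b c; lia.
Qed.

Lemma wdeg_le1 : wdeg_le 1%:M 0.
Proof.
move=> i j; rewrite !mxE; have [->|] := eqVneq i j; last by rewrite size_poly0.
by rewrite size_poly1 addnK.
Qed.

Lemma size_mxtrace_wdeg N e : wdeg_le N e -> (2 * size (\tr N) <= e + 2)%N.
Proof.
move=> wN; apply: (big_ind (fun x : {poly R} => 2 * size x <= e + 2)%N) => //.
- by rewrite size_poly0.
- move=> x y lex ley; apply: leq_trans (leq_mul (leqnn 2) (size_polyD x y)) _.
  by rewrite maxnMr geq_max lex ley.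
by move=> i _; have := wN i i; rewrite addnK.
Qed.

End WeightedDegree.

Lemma wdeg_le_mx2 (R : nzRingType) (a b c d : {poly R}) e :
  (2 * size a <= e + 2)%N -> (2 * size b <= e + 1)%N ->
  (2 * size c <= e + 3)%N -> (2 * size d <= e + 2)%N -> wdeg_le (mx2 a b c d) e.
Proof.
move=> sza szb szc szd i j; rewrite mxE.
case: i j => [[|[|//]] ?] [[|[|//]] ?] /=.
- by rewrite addn0 subn0.
- by rewrite addn0 -addnBA.
- by rewrite subn0 -addnA.
- by rewrite addnK.
Qed.

Section WeightedDegreeProducts.
Variables (R : nzRingType) (n : nat).
Implicit Types (M : nat -> 'M[{poly R}]_n.+1) (A B : {poly 'M[{poly R}]_n.+1}) (e : nat).

Lemma wdeg_le_rprod m M e : (forall k, wdeg_le (M k) e) -> wdeg_le (rprod m M) (e * m).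
Proof.
move=> wM; elim: m => [|m IHm] /=; first by rewrite muln0; apply: wdeg_le1.
by rewrite mulnS; apply: wdeg_leM.
Qed.

Definition coef_wdeg_le A e := forall j, wdeg_le A`_j (e + j).

Lemma coef_wdeg_leM A B e e' :
  coef_wdeg_le A e -> coef_wdeg_le B e' -> coef_wdeg_le (A * B) (e + e').
Proof.
move=> wA wB j; rewrite coefM; apply: wdeg_le_sum => -[k /= ltkj] _.
by apply: (wdeg_leW _ (wdeg_leM (wA k) (wB (j - k)%N))); lia.
Qed.

Lemma coef_wdeg_le_polyC (N : 'M[{poly R}]_n.+1) e : wdeg_le N e -> coef_wdeg_le N%:P e.
Proof.
by move=> wN [|j]; rewrite coefC /=; [rewrite addn0 | apply: wdeg_le0].
Qed.

Lemma coef_wdeg_le_rprod m (M : nat -> {poly 'M[{poly R}]_n.+1}) e :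
  (forall k, coef_wdeg_le (M k) e) -> coef_wdeg_le (rprod m M) (e * m).
Proof.
move=> wM; elim: m => [|m IHm] /= j.
  by rewrite muln0 coefC; case: eqP => [->|_]; [apply: wdeg_le1 | apply: wdeg_le0].
by rewrite mulnS; apply: coef_wdeg_leM.
Qed.

End WeightedDegreeProducts.

Lemma map_Amat (S S' : comPzRingType) (phi : {rmorphism S -> S'}) (f g al1 al2 t w wi z : S) :
  map_mx phi (Amat f g al1 al2 t w wi z) =
  Amat (phi f) (phi g) (phi al1) (phi al2) (phi t) (phi w) (phi wi) (phi z).
Proof.
by rewrite /Amat !map_mxM !map_mx2 !(rmorph0, rmorph1, rmorphB, rmorphD, rmorphM, rmorphN).
Qed.

Lemma horner0_chip (R : comUnitRingType) p (f g al1 al2 t w : R) :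
  (chip p f g al1 al2 t w).[0] = Ip p f g al1 al2 t w.
Proof.
rewrite /chip /Ip -horner_evalE -trace_map_mx rmorph_prod; congr (\tr _).
apply: eq_bigr => i _ /=; rewrite map_Amat /= !horner_evalE.
by rewrite !(hornerC, hornerD, hornerX) -polyC_natr hornerC add0r.
Qed.

Section TransferMatrices.
Variables (R : comUnitRingType) (f g a1 a2 t : R).
Local Notation S := {poly R}.
Implicit Types (y : S) (k : nat).

Definition zplus k : S := 'X + k%:R.

Definition Lmx y : 'M[S]_2 := mx2 1 0 (f%:P - t%:P * f%:P * g%:P - t%:P * y) 1.

Definition Kmx y : 'M[S]_2 :=
  mx2 g%:P 1 (y + a2%:P) 0 * mx2 (- f%:P) 1 y 0 *
  mx2 (t%:P * y - g%:P + t%:P * f%:P * g%:P) 1 (y - a1%:P) 0.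

Definition Wmx (c : R) : 'M[S]_2 := mx2 c%:P 0 0 1.

Definition Dmx y : 'M[S]_2 :=
  mx2 ((f + t)%:P * y - (f * g * (f - g + t) + g * a1)%:P) 0 0 ((- f)%:P * y - (f * a2)%:P).

Definition Omx y : 'M[S]_2 :=
  mx2 0 (y - (f * g)%:P) ((y + a2%:P) * (y - (a1 + f * (f - g + t))%:P)) 0.

Definition Pmx y : 'M[S]_2 := Dmx y + Omx y.

Lemma Amat_conjW (w : R) y :
  Amat f%:P g%:P a1%:P a2%:P t%:P w%:P (w^-1)%:P y = Wmx w * (Lmx y * Kmx y) * Wmx w^-1.
Proof. by rewrite /Amat !mulmxE !mulrA. Qed.

Lemma Wmx_mul c c' : Wmx c * Wmx c' = Wmx (c * c').
Proof. by rewrite /Wmx mx2_mul -polyCM !(mulr0, mul0r, mulr1, addr0, add0r). Qed.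

Lemma Wmx1 : Wmx 1 = 1.
Proof. exact: mx2_1. Qed.

Lemma mul_Kmx_Lmx y y' : y = y' + 1 -> Kmx y * Lmx y' = Pmx y.
Proof.
move=> ->; rewrite /Kmx /Lmx /Pmx /Dmx /Omx !mx2_mul mx2_add.
by rewrite !(polyCD, polyCN, polyCM, polyCB); congr mx2; ring.
Qed.

Section ConstantFixingMorphism.
Variable phi : {rmorphism S -> S}.
Hypothesis phiC : forall c, phi c%:P = c%:P.

Lemma map_Dmx y : map_mx phi (Dmx y) = Dmx (phi y).
Proof. by rewrite /Dmx /= map_mx2 !(rmorph0, rmorphB, rmorphN, rmorphD, rmorphM, phiC). Qed.

Lemma map_Omx y : map_mx phi (Omx y) = Omx (phi y).
Proof. by rewrite /Omx /= map_mx2 !(rmorph0, rmorphB, rmorphN, rmorphD, rmorphM, phiC). Qed.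

Lemma map_Pmx y : map_mx phi (Pmx y) = Pmx (phi y).
Proof. by rewrite /Pmx rmorphD /= map_Dmx map_Omx. Qed.

End ConstantFixingMorphism.

Lemma zplus_comp k i : zplus k \Po ('X + (i%:R)%:P) = zplus (k + i).
Proof.
by rewrite /zplus comp_polyD comp_polyX -polyC_natr comp_polyC !polyC_natr natrD addrAC addrA.
Qed.

Lemma size_zplus k : size (zplus k) = 2.
Proof. by rewrite /zplus -polyC_natr size_XaddC. Qed.

Lemma wdeg_le_Dmx y : (size y <= 2)%N -> wdeg_le (Dmx y) 2.
Proof.
move=> szy; apply: wdeg_le_mx2; rewrite ?size_poly0 // -[(2 + 2)%N]/(2 * 2)%N leq_pmul2l //;
  exact: size_MsubC_le2.
Qed.

Lemma wdeg_le_Omx y : (size y <= 2)%N -> wdeg_le (Omx y) 3.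
Proof.
move=> szy; apply: wdeg_le_mx2; rewrite ?size_poly0 //.
  by rewrite -[(3 + 1)%N]/(2 * 2)%N leq_pmul2l // size_subC_le2.
rewrite -[(3 + 3)%N]/(2 * 3)%N leq_pmul2l // (leq_trans (size_polyMleq _ _)) //.
rewrite -[3%N]/((2 + 2).-1) -!subn1 leq_sub2r // leq_add ?size_subC_le2 //.
by rewrite -[a2%:P]opprK -polyCN size_subC_le2.
Qed.

(* The variable of {poly 'M[S]_2} plays the role of eps. *)
Definition Peps k : {poly 'M[S]_2} := (Dmx (zplus k))%:P + 'X * (Omx (zplus k))%:P.

Lemma coef_Peps k j :
  (Peps k)`_j = if j == 0%N then Dmx (zplus k) else if j == 1%N then Omx (zplus k) else 0.
Proof. by rewrite /Peps coefD coefXM !coefC; case: j => [|[|j]]; rewrite ?addr0 ?add0r. Qed.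

Lemma size_Peps k : (size (Peps k) <= 2)%N.
Proof.
apply/leq_sizeP => j le2j; rewrite coef_Peps.
by case: j le2j => [|[|j]].
Qed.

Lemma horner1_Peps k : (Peps k).[1] = Pmx (zplus k).
Proof.
by rewrite /Peps hornerD hornerC -commr_polyX hornerMX hornerC mulr1.
Qed.

Lemma deriv_Peps k : (Peps k)^`() = (Omx (zplus k))%:P.
Proof. by rewrite /Peps derivD derivC add0r derivM derivX derivC mul1r mulr0 addr0. Qed.

Lemma coef_wdeg_le_Peps k : coef_wdeg_le (Peps k) 2.
Proof.
move=> j; rewrite coef_Peps; case: j => [|[|j]] /=.
- exact: wdeg_le_Dmx (eq_leq (size_zplus k)).
- exact: wdeg_le_Omx (eq_leq (size_zplus k)).
- exact: wdeg_le0.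
Qed.

Lemma map_Peps i k :
  map_poly (map_mx (comp_poly ('X + (i%:R)%:P))) (Peps k) = Peps (k + i).
Proof.
have compC (c : R) : c%:P \Po ('X + (i%:R)%:P) = c%:P by exact: comp_polyC.
rewrite /Peps rmorphD rmorphM /= map_polyX !map_polyC /=.
by rewrite (map_Dmx compC) (map_Omx compC) -zplus_comp.
Qed.

Lemma mxtrace_rprod_Pmx_sum n :
  \tr (rprod n (fun k => Pmx (zplus k))) = \sum_(j < n.+1) \tr ((rprod n Peps)`_j).
Proof.
have [szQ _] := coef_rprod_top n size_Peps.
rewrite -(eq_rprod (fun k _ => horner1_Peps k)) -horner1_rprod (horner_coef_wide _ szQ).
by rewrite raddf_sum; apply: eq_bigr => j _; rewrite expr1n mulr1.
Qed.

Lemma coef_rprod_lin n a c : (rprod n (fun k => a%:P * zplus k - c%:P))`_n = a ^+ n.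
Proof.
have szlin k : (size (a%:P * zplus k - c%:P)%R <= 2)%N.
  exact/size_MsubC_le2/eq_leq/size_zplus.
rewrite (coef_rprod_top n szlin).2 -rprod_cst; apply: eq_rprod => k _.
by rewrite coefB coefCM coefC /zplus coefD coefX -polyC_natr coefC /= addr0 mulr1 subr0.
Qed.

Lemma zplusS k : zplus k.+1 = zplus k + 1.
Proof. by rewrite /zplus -natr1 addrA. Qed.

Section PrimeCharacteristic.
Variable p : nat.
Hypothesis pcharRp : p \in [pchar R].

Let p_gt0 : (0 < p)%N := prime_gt0 (pcharf_prime pcharRp).
Let predpS : p.-1.+1 = p := prednK p_gt0.

Lemma zplus_addp k : zplus (k + p) = zplus k.
Proof. by rewrite /zplus natrD -(polyC_natr _ p) (pcharf0 pcharRp) polyC0 addr0. Qed.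

Lemma zplus0 : zplus 0 = zplus p.-1 + 1.
Proof. by rewrite -zplusS predpS -(zplus_addp 0). Qed.

Lemma chip_rprod w : w \is a GRing.unit ->
  chip p f g a1 a2 t w = \tr (rprod p (fun k => Pmx (zplus k))).
Proof.
move=> w_unit; have WW' : Wmx w * Wmx w^-1 = 1 by rewrite Wmx_mul mulrV ?Wmx1.
have W'W : Wmx w^-1 * Wmx w = 1 by rewrite Wmx_mul mulVr ?Wmx1.
rewrite /chip (rprod_ord p (fun k => Amat f%:P g%:P a1%:P a2%:P t%:P w%:P (w^-1)%:P (zplus k))).
rewrite (eq_rprod (fun k _ => Amat_conjW w (zplus k))) rprod_conj //.
rewrite mxtrace_mulrC mulrA W'W mul1r -predpS rprod_regroup mxtrace_mulrC mulrA.
rewrite (mul_Kmx_Lmx zplus0) mxtrace_mulrC rprod_recl.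
by congr (\tr (_ * _)); apply: eq_rprod => k _; apply: mul_Kmx_Lmx (zplusS k).
Qed.

Lemma mxtrace_rprod_Pmx_comp :
  (\tr (rprod p (fun k => Pmx (zplus k)))) \Po ('X + 1) = \tr (rprod p (fun k => Pmx (zplus k))).
Proof.
have compC (c : R) : c%:P \Po ('X + (1%:R)%:P) = c%:P by exact: comp_polyC.
have -> : 'X + 1 = 'X + (1%:R)%:P :> S by rewrite mulr1n polyC1.
rewrite -trace_map_mx rmorph_rprod /=.
rewrite (eq_rprod (fun k _ => map_Pmx compC (zplus k))) /=.
under eq_rprod do rewrite zplus_comp addn1.
rewrite -{1}predpS rprodS predpS (zplus_addp 0) mxtrace_mulrC.
by rewrite -(rprod_recl _ (fun k => Pmx (zplus k))) predpS.
Qed.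

Lemma size_mxtrace_rprod_Pmx : (size (\tr (rprod p (fun k => Pmx (zplus k)))) <= p + p)%N.
Proof.
have wP k : wdeg_le (Pmx (zplus k)) 3.
  have szz := eq_leq (size_zplus k).
  by apply: wdeg_leD (wdeg_le_Omx szz); apply: wdeg_leW (wdeg_le_Dmx szz).
have := size_mxtrace_wdeg (wdeg_le_rprod p wP); have := prime_gt1 (pcharf_prime pcharRp).
by move: (size _) => d; lia.
Qed.

Lemma Peps_addp k : Peps (k + p) = Peps k.
Proof. by rewrite /Peps zplus_addp. Qed.

Definition Peps_dprod i := rprod p (fun k => if k == i then (Omx (zplus k))%:P else Peps k).

Definition Peps_rot i := (Omx (zplus i))%:P * rprod p.-1 (fun k => Peps (i.+1 + k)).

Lemma deriv_rprod_Peps : (rprod p Peps)^`() = \sum_(i < p) Peps_dprod i.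
Proof.
rewrite deriv_rprod; apply: eq_bigr => i _; apply: eq_rprod => k _.
by case: eqP => // ->; rewrite deriv_Peps.
Qed.

Lemma mxtrace_Peps_dprod i m : (i < p)%N -> \tr ((Peps_dprod i)`_m) = \tr ((Peps_rot i)`_m).
Proof.
move=> ltip; have def_p : p = (i.+1 + (p - i.+1))%N by rewrite subnKC.
rewrite /Peps_dprod {1}def_p rprodD rprodS eqxx.
rewrite (@eq_rprod _ _ _ (fun k => Peps (i.+1 + k))); last first.
  by move=> k _; rewrite ifN // neq_ltn addSn ltnS leq_addr orbT.
rewrite (@eq_rprod _ i _ Peps); last by move=> k ltki; rewrite ifN // neq_ltn ltki.
rewrite mxtrace_coefMC -mulrA /Peps_rot.
have -> : p.-1 = (p - i.+1 + i)%N by lia.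
rewrite rprodD (@eq_rprod _ i _ Peps) // => k _.
by rewrite addnA subnKC // addnC Peps_addp.
Qed.

Lemma map_Peps_rot i : map_poly (map_mx (comp_poly ('X + (i%:R)%:P))) (Peps_rot 0) = Peps_rot i.
Proof.
have compC (c : R) : c%:P \Po ('X + (i%:R)%:P) = c%:P by exact: comp_polyC.
rewrite /Peps_rot rmorphM /= map_polyC /= (map_Omx compC) /= zplus_comp rmorph_rprod.
by congr (_ * _); apply: eq_rprod => k _ /=; rewrite map_Peps add1n addSnnS addnC.
Qed.

Lemma mxtrace_Peps_dprod_comp i m : (i < p)%N ->
  \tr ((Peps_dprod i)`_m) = (\tr ((Peps_rot 0)`_m)) \Po ('X + (i%:R)%:P).
Proof. by move=> ltip; rewrite mxtrace_Peps_dprod // -map_Peps_rot coef_map -trace_map_mx. Qed.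

Lemma size_mxtrace_Peps_rot0 m : (m.+2 <= p)%N -> (size (\tr ((Peps_rot 0)`_m)) <= (p + p).-1)%N.
Proof.
have wO := coef_wdeg_le_polyC (wdeg_le_Omx (eq_leq (size_zplus 0))).
have wQ := coef_wdeg_le_rprod p.-1 (fun k => coef_wdeg_le_Peps k.+1).
have := size_mxtrace_wdeg (coef_wdeg_leM wO wQ m).
by move: (size _) => d; lia.
Qed.

Lemma coefp_mxtrace_coef_Peps j : (0 < j < p)%N -> (\tr ((rprod p Peps)`_j))`_p = 0.
Proof.
case: j => [//|j] /andP[_ ltjp].
apply: (mulrn_eq0_pchar pcharRp (j := j.+1)); first by rewrite gtnNdvd.
rewrite -coefMn -raddfMn -coef_deriv deriv_rprod_Peps.
rewrite [(\sum_(i < p) Peps_dprod i)`_j]coef_sum raddf_sum.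
rewrite (eq_bigr _ (fun i _ => mxtrace_Peps_dprod_comp j (ltn_ord i))).
by rewrite coef_sum_comp_XaddC_pchar // size_mxtrace_Peps_rot0.
Qed.

Lemma coefp_mxtrace_coef0_Peps : (\tr ((rprod p Peps)`_0))`_p = t ^+ p.
Proof.
rewrite coef0_rprod (@eq_rprod _ _ _ (fun k => Dmx (zplus k))); last first.
  by move=> k _; rewrite coef_Peps.
rewrite /Dmx rprod_diag mxtrace_mx2 coefD !coef_rprod_lin.
have pnat_p : [pchar R].-nat p.
  by rewrite (eq_pnat _ (pcharf_eq pcharRp)) (pnat_id (pcharf_prime pcharRp)).
by rewrite exprDn_pchar // exprNn_pchar // addrAC subrr add0r.
Qed.

Lemma coefp_mxtrace_coefp_Peps : (\tr ((rprod p Peps)`_p))`_p = (p == 2)%:R.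
Proof.
rewrite (coef_rprod_top p size_Peps).2 (@eq_rprod _ _ _ (fun k => Omx (zplus k))); last first.
  by move=> k _; rewrite coef_Peps.
have [p2|p_odd] := even_prime (pcharf_prime pcharRp); last first.
  have p_neq2 : p != 2 by apply: contraTneq p_odd => ->.
  by rewrite mxtrace_rprod_antidiag // coef0 (negbTE p_neq2).
have char2 : 2%:R = 0 :> R by rewrite -p2 (pcharf0 pcharRp).
rewrite p2 /= mulr1 /Omx mx2_mul mxtrace_mx2 !(mul0r, mulr0, addr0, add0r).
set be := a1 + f * (f - g + t).
have -> : (zplus 1 - (f * g)%:P) * ((zplus 0 + a2%:P) * (zplus 0 - be%:P)) =
    ('X + (1 - f * g)%:P) * ('X + a2%:P) * ('X + (- be)%:P).
  by rewrite /zplus mulr0n addr0 !(polyCB, polyCN, polyC1); ring.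
have -> : (zplus 1 + a2%:P) * (zplus 1 - be%:P) * (zplus 0 - (f * g)%:P) =
    ('X + (1 + a2)%:P) * ('X + (1 - be)%:P) * ('X + (- (f * g))%:P).
  by rewrite /zplus mulr0n addr0 !(polyCB, polyCN, polyC1, polyCD); ring.
rewrite coefD !coef2_cubic.
have -> : 1 - f * g + a2 + - be + (1 + a2 + (1 - be) + - (f * g)) =
   1 + 2%:R * (1 - f * g + a2 - be) by ring.
by rewrite char2 mul0r addr0.
Qed.

Lemma coefp_mxtrace_rprod_Pmx :
  (\tr (rprod p (fun k => Pmx (zplus k))))`_p = t ^+ p + (p == 2)%:R.
Proof.
rewrite mxtrace_rprod_Pmx_sum coef_sum big_ord_recr /= coefp_mxtrace_coefp_Peps.
rewrite (bigD1 (Ordinal p_gt0)) //= coefp_mxtrace_coef0_Peps big1 ?addr0 // => -[[|j] ltjp] //= _.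
exact: coefp_mxtrace_coef_Peps.
Qed.

Lemma chipE w : w \is a GRing.unit ->
  chip p f g a1 a2 t w = (Ip p f g a1 a2 t w)%:P + (t ^+ p + (p == 2)%:R)%:P * ('X ^+ p - 'X).
Proof.
move=> w_unit; rewrite -horner0_chip horner_coef0 chip_rprod // -coefp_mxtrace_rprod_Pmx.
exact: (comp_XaddC1_eq pcharRp mxtrace_rprod_Pmx_comp size_mxtrace_rprod_Pmx).
Qed.

End PrimeCharacteristic.

End TransferMatrices.

Theorem proposition3p5 (R : comUnitRingType) (p : nat) (f g al1 al2 t w : R) :
  p \in [pchar R] -> w \is a GRing.unit ->
  chip p f g al1 al2 t w =
    if p != 2%N then
      (Ip p f g al1 al2 t w)%:P - (t ^+ p)%:P * 'X + (t ^+ p)%:P * 'X ^+ p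
    else
      (Ip p f g al1 al2 t w)%:P + (1 + t ^+ 2)%:P * ('X + 'X ^+ 2).
Proof.
move=> pcharRp w_unit; rewrite chipE //.
have [p2|_] /= := eqVneq p 2%N; last by rewrite mulr0n addr0; ring.
have char2 : 2%:R = 0 :> {poly R} by rewrite -p2 -polyC_natr (pcharf0 pcharRp).
have -> : ('X ^+ p - 'X : {poly R}) = 'X + 'X ^+ 2 - 'X * 2%:R by rewrite p2; ring.
by rewrite p2 char2 mulr0 subr0 mulr1n (addrC (t ^+ 2)).
Qed.
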